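(* Let $p$ be an intrinsic cross cap of a Whitney metric $d\sigma^2$ on a $2$-manifold, and let $(u,v)$ be a local coordinate system centered at $p$ that is adjusted at $p$, with $d\sigma^2=E\,du^2+2F\,du\,dv+G\,dv^2$ and $\delta:=EG-F^2$. Then at $(u,v)=(0,0)$, $$\delta_{uu}\delta_{vv}-\delta_{uv}^2=4E\Delta,\qquad \Delta:=\det\begin{pmatrix}E&F_u&F_v\\ F_u&G_{uu}/2&G_{uv}/2\\ F_v&G_{uv}/2&G_{vv}/2\end{pmatrix}\Bigg|_{(0,0)}.$$
   Context: For a smooth positive semi-definite metric $d\sigma^2$ with $\langle\cdot,\cdot\rangle=d\sigma^2$: singular points are where it is not positive definite; $\mathcal{N}_p$ is the null space; the Kossowski pseudo-connection is $\Gamma(X,Y,Z)=\tfrac12\bigl(X\langle Y,Z\rangle+Y\langle X,Z\rangle-Z\langle X,Y\rangle+\langle[X,Y],Z\rangle-\langle[X,Z],Y\rangle-\langle[Y,Z],X\rangle\bigr)$; admissible: at each singular point $p$, $\Gamma(V_1,V_2,V_3)(p)=0$ whenever $V_3(p)\in\mathcal{N}_p$. A singular point $p$ of an admissible metric is an intrinsic cross cap if in local coordinates $(u,v)$ centered at $p$, with $\delta=EG-F^2$, $\delta_{uu}\delta_{vv}-\delta_{uv}^2\ne0$ at $p$. A Whitney metric is an admissible metric all of whose singular points are intrinsic cross caps. A coordinate system $(u,v)$ is adjusted at $p$ if $\partial_v\in\mathcal{N}_p$. *)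

From Stdlib Require Import Reals List.
From Coquelicot Require Import Coquelicot.
Open Scope R_scope.

Definition pu (f : R -> R -> R) : R -> R -> R := fun u v => Derive (fun t => f t v) u.
Definition pv (f : R -> R -> R) : R -> R -> R := fun u v => Derive (fun t => f u t) v.

Fixpoint pd (w : list bool) (f : R -> R -> R) : R -> R -> R :=
  match w with
  | nil => f
  | b :: w' => (if b then pu else pv) (pd w' f)
  end.

Definition open2 (U : R -> R -> Prop) : Prop :=
  forall u v, U u v -> exists eps, 0 < eps /\
    forall u' v', Rabs (u' - u) < eps -> Rabs (v' - v) < eps -> U u' v'.

Definition cont2 (f : R -> R -> R) (u v : R) : Prop :=
  forall eps, 0 < eps -> exists d, 0 < d /\
    forall u' v', Rabs (u' - u) < d -> Rabs (v' - v) < d ->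
      Rabs (f u' v' - f u v) < eps.

Definition smooth_on (U : R -> R -> Prop) (f : R -> R -> R) : Prop :=
  forall (w : list bool) u v, U u v ->
    cont2 (pd w f) u v /\
    ex_derive (fun t => pd w f t v) u /\
    ex_derive (fun t => pd w f u t) v.

(* Vector fields X = X1 d/du + X2 d/dv. *)
Definition vf := ((R -> R -> R) * (R -> R -> R))%type.

Definition vf_smooth_on (U : R -> R -> Prop) (X : vf) : Prop :=
  smooth_on U (fst X) /\ smooth_on U (snd X).

Definition act (X : vf) (f : R -> R -> R) : R -> R -> R :=
  fun u v => fst X u v * pu f u v + snd X u v * pv f u v.

Definition bracket (X Y : vf) : vf :=
  (fun u v => act X (fst Y) u v - act Y (fst X) u v,
   fun u v => act X (snd Y) u v - act Y (snd X) u v).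

Definition metric (E F G : R -> R -> R) (X Y : vf) : R -> R -> R :=
  fun u v => E u v * fst X u v * fst Y u v
           + F u v * (fst X u v * snd Y u v + snd X u v * fst Y u v)
           + G u v * snd X u v * snd Y u v.

Definition Gamma (E F G : R -> R -> R) (X Y Z : vf) : R -> R -> R :=
  fun u v => / 2 * ( act X (metric E F G Y Z) u v
                   + act Y (metric E F G X Z) u v
                   - act Z (metric E F G X Y) u v
                   + metric E F G (bracket X Y) Z u v
                   - metric E F G (bracket X Z) Y u v
                   - metric E F G (bracket Y Z) X u v).

Definition qform (E F G : R -> R -> R) (u v a b : R) : R :=
  E u v * a * a + 2 * F u v * a * b + G u v * b * b.

Definition in_null (E F G : R -> R -> R) (u v a b : R) : Prop :=
  E u v * a + F u v * b = 0 /\ F u v * a + G u v * b = 0.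

Definition singular_pt (E F G : R -> R -> R) (u v : R) : Prop :=
  ~ (forall a b, (a <> 0 \/ b <> 0) -> 0 < qform E F G u v a b).

Definition psd_metric_on (U : R -> R -> Prop) (E F G : R -> R -> R) : Prop :=
  smooth_on U E /\ smooth_on U F /\ smooth_on U G /\
  (forall u v, U u v -> forall a b, 0 <= qform E F G u v a b).

Definition admissible_on (U : R -> R -> Prop) (E F G : R -> R -> R) : Prop :=
  forall u v, U u v -> singular_pt E F G u v ->
    forall V1 V2 V3 : vf,
      vf_smooth_on U V1 -> vf_smooth_on U V2 -> vf_smooth_on U V3 ->
      in_null E F G u v (fst V3 u v) (snd V3 u v) ->
      Gamma E F G V1 V2 V3 u v = 0.

Definition delta (E F G : R -> R -> R) : R -> R -> R :=
  fun u v => E u v * G u v - F u v ^ 2.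

Definition hess_det (f : R -> R -> R) (u v : R) : R :=
  pu (pu f) u v * pv (pv f) u v - (pv (pu f) u v) ^ 2.

(* intrinsic cross cap (in coordinates; translation to center at (u,v)
   does not change derivatives) *)
Definition intrinsic_cross_cap (U : R -> R -> Prop) (E F G : R -> R -> R) (u v : R) : Prop :=
  admissible_on U E F G /\ singular_pt E F G u v /\ hess_det (delta E F G) u v <> 0.

Definition whitney_on (U : R -> R -> Prop) (E F G : R -> R -> R) : Prop :=
  psd_metric_on U E F G /\ admissible_on U E F G /\
  (forall u v, U u v -> singular_pt E F G u v -> intrinsic_cross_cap U E F G u v).

Definition det3 (a11 a12 a13 a21 a22 a23 a31 a32 a33 : R) : R :=
  a11 * (a22 * a33 - a23 * a32)
  - a12 * (a21 * a33 - a23 * a31)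
  + a13 * (a21 * a32 - a22 * a31).

(* In adjusted coordinates [(0,1)] spans the null space at p, so [F = G = 0] there, and
   admissibility applied to the coordinate fields gives [Γ(∂u,∂v,∂v) = G_u/2 = 0] and
   [Γ(∂v,∂v,∂v) = G_v/2 = 0].  Writing [δ] as half the polarized Gram determinant
   [P(X,Y) = E_X G_Y + E_Y G_X - 2 F_X F_Y] of the coefficient triple, the Leibniz rule
   [∂ P(X,Y) = P(∂X,Y) + P(X,∂Y)] gives [δ_ab = P(∂_a, ∂_b) + P(id, ∂_a∂_b)], which at p
   is [E G_ab - 2 F_a F_b].  The identity is then polynomial algebra. *)

From Stdlib Require Import Reals Lra FunctionalExtensionality.
From Coquelicot Require Import Coquelicot.
Open Scope R_scope.

Definition polar (e f g e' f' g' : R) : R := e * g' + e' * g - 2 * f * f'.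

Lemma polarC e f g e' f' g' : polar e f g e' f' g' = polar e' f' g' e f g.
Proof. unfold polar; ring. Qed.

Lemma Derive_polar (e f g e' f' g' : R -> R) t :
  ex_derive e t -> ex_derive f t -> ex_derive g t ->
  ex_derive e' t -> ex_derive f' t -> ex_derive g' t ->
  Derive (fun s => polar (e s) (f s) (g s) (e' s) (f' s) (g' s)) t =
  polar (Derive e t) (Derive f t) (Derive g t) (e' t) (f' t) (g' t)
  + polar (e t) (f t) (g t) (Derive e' t) (Derive f' t) (Derive g' t).
Proof.
  intros He Hf Hg He' Hf' Hg'. unfold polar.
  apply is_derive_unique; auto_derive; [repeat split; assumption |].
  (* [auto_derive] leaves the functions eta-expanded, which [ring] treats as new atoms *)
  repeat match goal with |- context [fun x : R => ?h x] => change (fun x : R => h x) with h end.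
  ring.
Qed.

Lemma open2_locally (U : R -> R -> Prop) u v :
  open2 U -> U u v -> locally u (fun t => U t v) /\ locally v (fun t => U u t).
Proof.
  intros HU Huv. destruct (HU u v Huv) as [eps [Heps Hball]].
  split; exists (mkposreal eps Heps); intros t Ht; apply Hball;
    rewrite ?Rminus_diag, ?Rabs_R0; assumption.
Qed.

Lemma pd1_ext_open (U : R -> R -> Prop) b (f g : R -> R -> R) u v :
  open2 U -> (forall a c, U a c -> f a c = g a c) -> U u v ->
  pd (b :: nil) f u v = pd (b :: nil) g u v.
Proof.
  intros HU Hfg Huv. destruct (open2_locally U u v HU Huv) as [Hu Hv].
  destruct b; simpl; unfold pu, pv; apply Derive_ext_loc.
  - exact (filter_imp _ _ (fun t Ht => Hfg t v Ht) Hu).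
  - exact (filter_imp _ _ (fun t Ht => Hfg u t Ht) Hv).
Qed.

Section PolarizedGramDeterminant.

Variables (U : R -> R -> Prop) (E F G : R -> R -> R).
Hypotheses (HU : open2 U) (SE : smooth_on U E) (SF : smooth_on U F) (SG : smooth_on U G).

Definition polar_at (w1 w2 : list bool) (u v : R) : R :=
  polar (pd w1 E u v) (pd w1 F u v) (pd w1 G u v) (pd w2 E u v) (pd w2 F u v) (pd w2 G u v).

Lemma pd_polar_at b w1 w2 u v : U u v ->
  pd (b :: nil) (polar_at w1 w2) u v = polar_at (b :: w1) w2 u v + polar_at w1 (b :: w2) u v.
Proof.
  intros Huv.
  destruct (SE w1 u v Huv) as [_ [E1u E1v]], (SF w1 u v Huv) as [_ [F1u F1v]],
    (SG w1 u v Huv) as [_ [G1u G1v]], (SE w2 u v Huv) as [_ [E2u E2v]],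
    (SF w2 u v Huv) as [_ [F2u F2v]], (SG w2 u v Huv) as [_ [G2u G2v]].
  destruct b; apply Derive_polar; assumption.
Qed.

Lemma delta_polar_at u v : delta E F G u v = polar_at nil nil u v / 2.
Proof. unfold delta, polar_at, polar; simpl; field. Qed.

Lemma pd_delta b u v : U u v -> pd (b :: nil) (delta E F G) u v = polar_at nil (b :: nil) u v.
Proof.
  intros Huv.
  assert (Hhalf : pd (b :: nil) (delta E F G) u v = / 2 * pd (b :: nil) (polar_at nil nil) u v).
  { destruct b; simpl; unfold pu, pv; rewrite <- Derive_scal; apply Derive_ext;
      intro t; rewrite delta_polar_at; field. }
  rewrite Hhalf, pd_polar_at by exact Huv.
  unfold polar_at at 1. rewrite polarC. fold (polar_at nil (b :: nil) u v). field.
Qed.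

Lemma pd_pd_delta b1 b2 u v : U u v ->
  pd (b2 :: b1 :: nil) (delta E F G) u v
  = polar_at (b2 :: nil) (b1 :: nil) u v + polar_at nil (b2 :: b1 :: nil) u v.
Proof.
  intros Huv.
  transitivity (pd (b2 :: nil) (polar_at nil (b1 :: nil)) u v).
  - exact (pd1_ext_open U b2 (pd (b1 :: nil) (delta E F G)) _ u v HU (pd_delta b1) Huv).
  - apply pd_polar_at, Huv.
Qed.

End PolarizedGramDeterminant.

Lemma in_null_singular_pt E F G u v a b :
  in_null E F G u v a b -> (a <> 0 \/ b <> 0) -> singular_pt E F G u v.
Proof.
  intros [H1 H2] Hab Hpos. specialize (Hpos a b Hab). unfold qform in Hpos.
  assert (Hq : E u v * a * a + 2 * F u v * a * b + G u v * b * b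
               = a * (E u v * a + F u v * b) + b * (F u v * a + G u v * b)) by ring.
  rewrite Hq, H1, H2 in Hpos. lra.
Qed.

Lemma pd_const c b w : pd (b :: w) (fun _ _ : R => c) = fun _ _ => 0.
Proof.
  assert (Hd : forall (b' : bool) (k : R),
             (if b' then pu else pv) (fun _ _ : R => k) = fun _ _ : R => 0).
  { intros [] k; unfold pu, pv;
      do 2 (apply functional_extensionality; intro); apply Derive_const. }
  revert b; induction w as [|b' w IH]; intro b; [apply Hd|].
  transitivity ((if b then pu else pv) (pd (b' :: w) (fun _ _ : R => c))); [reflexivity|].
  rewrite IH; apply Hd.
Qed.

Lemma cont2_const c u v : cont2 (fun _ _ : R => c) u v.
Proof.
  intros eps Heps. exists 1. split; [lra|]. intros. rewrite Rminus_diag, Rabs_R0. exact Heps.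
Qed.

Lemma smooth_on_const U c : smooth_on U (fun _ _ : R => c).
Proof.
  intros [|b w] u v _; [cbn [pd] | rewrite pd_const];
    (split; [apply cont2_const | split; apply ex_derive_const]).
Qed.

Definition vf_du : vf := (fun _ _ => 1, fun _ _ => 0).
Definition vf_dv : vf := (fun _ _ => 0, fun _ _ => 1).

Lemma vf_smooth_on_du U : vf_smooth_on U vf_du.
Proof. split; simpl; apply smooth_on_const. Qed.

Lemma vf_smooth_on_dv U : vf_smooth_on U vf_dv.
Proof. split; simpl; apply smooth_on_const. Qed.

Lemma Gamma_du_dv_dv E F G u v : Gamma E F G vf_du vf_dv vf_dv u v = pu G u v / 2.
Proof.
  unfold Gamma, bracket, metric, act, pu, pv, vf_du, vf_dv; simpl.
  rewrite !Derive_const.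
  rewrite (Derive_ext (fun t => E t v * 0 * 0 + F t v * (0 * 1 + 1 * 0) + G t v * 1 * 1)
             (fun t => G t v)) by (intro; ring).
  lra.
Qed.

Lemma Gamma_dv_dv_dv E F G u v : Gamma E F G vf_dv vf_dv vf_dv u v = pv G u v / 2.
Proof.
  unfold Gamma, bracket, metric, act, pu, pv, vf_dv; simpl.
  rewrite !Derive_const.
  rewrite (Derive_ext (fun t => E u t * 0 * 0 + F u t * (0 * 1 + 1 * 0) + G u t * 1 * 1)
             (fun t => G u t)) by (intro; ring).
  lra.
Qed.

Lemma admissible_null_dv U E F G u v :
  admissible_on U E F G -> U u v -> in_null E F G u v 0 1 ->
  pu G u v = 0 /\ pv G u v = 0.
Proof.
  intros Adm Huv Hnull.
  assert (Hsing : singular_pt E F G u v)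
    by exact (in_null_singular_pt E F G u v 0 1 Hnull (or_intror R1_neq_R0)).
  pose proof (Adm u v Huv Hsing vf_du vf_dv vf_dv (vf_smooth_on_du U) (vf_smooth_on_dv U)
                (vf_smooth_on_dv U) Hnull) as Hu.
  pose proof (Adm u v Huv Hsing vf_dv vf_dv vf_dv (vf_smooth_on_dv U) (vf_smooth_on_dv U)
                (vf_smooth_on_dv U) Hnull) as Hv.
  rewrite Gamma_du_dv_dv in Hu. rewrite Gamma_dv_dv_dv in Hv. lra.
Qed.

Theorem proposition4p4 (U : R -> R -> Prop) (E F G : R -> R -> R) :
  open2 U -> U 0 0 ->
  whitney_on U E F G ->
  intrinsic_cross_cap U E F G 0 0 ->
  in_null E F G 0 0 0 1 ->
  hess_det (delta E F G) 0 0 =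
  4 * E 0 0 *
  det3 (E 0 0)      (pu F 0 0)           (pv F 0 0)
       (pu F 0 0)   (pu (pu G) 0 0 / 2)  (pv (pu G) 0 0 / 2)
       (pv F 0 0)   (pv (pu G) 0 0 / 2)  (pv (pv G) 0 0 / 2).
Proof.
  intros HU HU0 [[SE [SF [SG _]]] [Adm _]] _ Hnull.
  destruct (admissible_null_dv U E F G 0 0 Adm HU0 Hnull) as [Gu Gv].
  destruct Hnull as [HN1 HN2].
  assert (F0 : F 0 0 = 0) by lra.
  assert (G0 : G 0 0 = 0) by lra.
  pose proof (pd_pd_delta U E F G HU SE SF SG true true 0 0 HU0) as Duu.
  pose proof (pd_pd_delta U E F G HU SE SF SG false false 0 0 HU0) as Dvv.
  pose proof (pd_pd_delta U E F G HU SE SF SG true false 0 0 HU0) as Duv.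
  cbn [pd] in Duu, Dvv, Duv.
  unfold hess_det; rewrite Duu, Dvv, Duv.
  unfold polar_at, polar; cbn [pd]. rewrite F0, G0, Gu, Gv.
  unfold det3; field.
Qed.
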